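(* For all integers $a,b,c,d\in\mathbb Z$, the following are equivalent in the algebra $(\mathbb Z,+,\mathbb Z)$: (1) $a:b::_m c:d$; (2) there are $k,\ell,o,u\in\mathbb Z$ with $a=k+o$, $b=\ell+o$, $c=k+u$, $d=\ell+u$; (3) $a-b=c-d$.
   Context: $(\mathbb Z,+,\mathbb Z)$ is the algebra with universe $\mathbb Z$, binary addition, and every integer as a constant (0-ary operation). Terms are built from a variable set $X$, $+$ and integer constants; $X(s)$ denotes the variables of term $s$. A justification is a pair of terms $s\to t$ with $X(t)\subseteq X(s)$. Monolinear justifications are those in which $s$ and $t$ contain no variable other than one fixed variable $x$, and $x$ occurs at most once in $s$ and at most once in $t$. For $a,b\in\mathbb Z$, $\uparrow^m(a\to b)$ is the set of monolinear justifications $s\to t$ with $a=s(\mathbf o)$, $b=t(\mathbf o)$ for some value $\mathbf o$ of the variables; $\uparrow^m(a\to b:\!\cdot\,c\to d):=\uparrow^m(a\to b)\cap\uparrow^m(c\to d)$. A monolinear justification is trivial if it lies in $\uparrow^m(a'\to b':\!\cdot\,c'\to d')$ for all $a',b',c',d'$. The arrow proportion $a\to b:\!\cdot_m\,c\to d$ holds iff either (i) all justifications in $\uparrow^m(a\to b)\cup\uparrow^m(c\to d)$ are trivial, or (ii) $J_d:=\uparrow^m(a\to b:\!\cdot\,c\to d)$ contains a non-trivial justification and for every $d'$, $J_d\subseteq J_{d'}$ implies $J_{d'}$ contains a non-trivial justification and $J_{d'}\subseteq J_d$ (inclusions ignoring trivial justifications). Finally $a:b::_m c:d$ iff $a\to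 b:\!\cdot_m\,c\to d$, $b\to a:\!\cdot_m\,d\to c$, $c\to d:\!\cdot_m\,a\to b$ and $d\to c:\!\cdot_m\,b\to a$ all hold. *)

From Stdlib Require Import ZArith Arith.
Open Scope Z_scope.

(* Terms of the algebra (Z, +, Z): variables (indexed by nat), integer
   constants (0-ary operations) and binary addition. *)
Inductive term : Type :=
  | TVar : nat -> term
  | TCst : Z -> term
  | TAdd : term -> term -> term.

Fixpoint eval (o : nat -> Z) (t : term) : Z :=
  match t with
  | TVar n => o n
  | TCst z => z
  | TAdd s u => eval o s + eval o u
  end.

Fixpoint occ (n : nat) (t : term) : nat :=
  match t with
  | TVar m => if Nat.eqb n m then 1%nat else 0%nat
  | TCst _ => 0%nat
  | TAdd s u => (occ n s + occ n u)%nat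
  end.

Definition xvar : nat := 0%nat.

Definition justification : Type := (term * term)%type.

Definition is_justification (j : justification) : Prop :=
  forall n, (0 < occ n (snd j))%nat -> (0 < occ n (fst j))%nat.

Definition monolinear (j : justification) : Prop :=
  is_justification j /\
  (forall n, n <> xvar -> occ n (fst j) = 0%nat /\ occ n (snd j) = 0%nat) /\
  (occ xvar (fst j) <= 1)%nat /\ (occ xvar (snd j) <= 1)%nat.

Definition up (a b : Z) (j : justification) : Prop :=
  monolinear j /\ exists o : nat -> Z, a = eval o (fst j) /\ b = eval o (snd j).

Definition up2 (a b c d : Z) (j : justification) : Prop :=
  up a b j /\ up c d j.

Definition trivial_just (j : justification) : Prop :=
  monolinear j /\ forall a' b' c' d', up2 a' b' c' d' j.

Definition incl_nt (J K : justification -> Prop) : Prop :=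
  forall j, J j -> ~ trivial_just j -> K j.

Definition has_nontrivial (J : justification -> Prop) : Prop :=
  exists j, J j /\ ~ trivial_just j.

Definition arrow_prop (a b c d : Z) : Prop :=
  (forall j, up a b j \/ up c d j -> trivial_just j)
  \/
  (has_nontrivial (up2 a b c d) /\
   forall d', incl_nt (up2 a b c d) (up2 a b c d') ->
     has_nontrivial (up2 a b c d') /\ incl_nt (up2 a b c d') (up2 a b c d)).

Definition analogy_m (a b c d : Z) : Prop :=
  arrow_prop a b c d /\ arrow_prop b a d c /\
  arrow_prop c d a b /\ arrow_prop d c b a.

(* A monolinear justification s -> t evaluates as an affine map: s(o) = p x + s0 and
   t(o) = q x + t0 with q <= p <= 1.  Hence two arrows a -> b and c -> d sharing a
   justification satisfy a = c and b = d (p = 0), b = d (p = 1, q = 0), or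
   a - b = c - d = s0 - t0 (p = q = 1).  In particular no justification is trivial,
   the translation x -> x + (b - a) justifies a -> b and c -> d whenever
   a - b = c - d, and it pins d down uniquely.  Conversely, the proportions
   a -> b :· c -> d and b -> a :· d -> c give (b = d or a - b = c - d) and
   (a = c or a - b = c - d), which together force a - b = c - d. *)
From Stdlib Require Import ZArith Lia.
Open Scope Z_scope.

Lemma eval_only_xvar (t : term) :
  (forall n, n <> xvar -> occ n t = 0%nat) ->
  forall o, eval o t = Z.of_nat (occ xvar t) * o xvar + eval (fun _ => 0) t.
Proof.
  unfold xvar in *.
  induction t as [[| m] | z | s IHs u IHu]; intros Honly o; cbn [eval occ Nat.eqb] in *.
  - lia.
  - specialize (Honly (S m) ltac:(discriminate)).
    rewrite Nat.eqb_refl in Honly. discriminate.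
  - lia.
  - rewrite IHs, IHu, Nat2Z.inj_add by (intros n Hn; specialize (Honly n Hn); lia).
    lia.
Qed.

Lemma monolinear_occ_xvar (s t : term) :
  monolinear (s, t) -> (occ xvar t <= occ xvar s <= 1)%nat.
Proof.
  intros [Hjust [_ [Hs Ht]]]. specialize (Hjust xvar). cbn [fst snd] in *.
  destruct (occ xvar t); [lia | specialize (Hjust ltac:(lia)); lia].
Qed.

Lemma up2_diff (a b c d : Z) (j : justification) :
  up2 a b c d j -> b = d \/ a - b = c - d.
Proof.
  destruct j as [s t].
  intros [[Hmono [o1 [Ea Eb]]] [_ [o2 [Ec Ed]]]].
  pose proof (monolinear_occ_xvar s t Hmono) as Hocc.
  destruct Hmono as [_ [Honly _]]. simpl in *.
  rewrite (eval_only_xvar s) in Ea, Ec by (intros n Hn; apply (Honly n Hn)).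
  rewrite (eval_only_xvar t) in Eb, Ed by (intros n Hn; apply (Honly n Hn)).
  destruct (occ xvar s) as [| [|]], (occ xvar t) as [| [|]]; lia.
Qed.

Lemma not_trivial_just (j : justification) : ~ trivial_just j.
Proof.
  intros [_ Hall]. destruct (up2_diff 0 0 0 1 j (Hall 0 0 0 1)); lia.
Qed.

Definition translation (k : Z) : justification := (TVar xvar, TAdd (TVar xvar) (TCst k)).

Lemma up_translation (a b k : Z) : up a b (translation k) <-> b = a + k.
Proof.
  split.
  - intros [_ [o [Ea Eb]]]. simpl in *. lia.
  - intros ->. split.
    + split; [| split; [| split]]; simpl.
      * intros n. destruct n; simpl; lia.
      * intros [|n] Hn; [contradiction | auto].
      * lia.
      * lia.
    + exists (fun _ => a). auto.
Qed.

Lemma arrow_prop_of_diff (a b c d : Z) : a - b = c - d -> arrow_prop a b c d.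
Proof.
  intros Hdiff. right.
  assert (Hup2 : forall d', c - d' = a - b -> up2 a b c d' (translation (b - a))).
  { intros d' Hd'. split; apply up_translation; lia. }
  split.
  - exists (translation (b - a)). split; [apply Hup2; lia | apply not_trivial_just].
  - intros d' Hincl.
    assert (Hd' : d' = d).
    { destruct (Hincl (translation (b - a))) as [_ Hup].
      - apply Hup2; lia.
      - apply not_trivial_just.
      - apply up_translation in Hup. lia. }
    subst d'. split.
    + exists (translation (b - a)). split; [apply Hup2; lia | apply not_trivial_just].
    + intros j Hj _. exact Hj.
Qed.

Lemma arrow_prop_diff (a b c d : Z) : arrow_prop a b c d -> b = d \/ a - b = c - d.
Proof.
  intros [Hall_trivial | [[j [Hj _]] _]].
  - exfalso. apply (not_trivial_just (translation (b - a))), Hall_trivial.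
    left. apply up_translation. lia.
  - exact (up2_diff a b c d j Hj).
Qed.

Theorem mainTheorem4 (a b c d : Z) :
  (analogy_m a b c d <->
     exists k l o u : Z, a = k + o /\ b = l + o /\ c = k + u /\ d = l + u) /\
  ((exists k l o u : Z, a = k + o /\ b = l + o /\ c = k + u /\ d = l + u) <->
     a - b = c - d).
Proof.
  assert (Hdecomp : (exists k l o u : Z, a = k + o /\ b = l + o /\ c = k + u /\ d = l + u)
                    <-> a - b = c - d).
  { split.
    - intros (k & l & o & u & H). lia.
    - intros H. exists a, b, 0, (c - a). lia. }
  split; [rewrite Hdecomp | exact Hdecomp].
  split.
  - intros [Habcd [Hbadc _]].
    apply arrow_prop_diff in Habcd. apply arrow_prop_diff in Hbadc. lia.
  - intros H. repeat split; apply arrow_prop_of_diff; lia.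
Qed.
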